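(* Let $\mathcal R\subset\mathbb Z^k$ be a polyhedral region and let $n$ be a positive integer. Then $\mathcal R$ can be written as the union of a set of measure zero and a polyhedral region $\mathcal R'$ such that every $\vec z\in\mathcal R'$ lies in a $k$-dimensional box of size $n$ contained entirely in $\mathcal R$.
   Context: A half-space is $\{\vec z\in\mathbb Z^k:\vec v\cdot\vec z>m\}$ with $\vec v\in\mathbb Z^k$, $m\in\mathbb Z$; a polyhedral region is $\mathbb Z^k$ or an intersection of finitely many half-spaces. A hyperplane is $\{\vec z\in\mathbb Z^k:\vec v\cdot\vec z=m\}$ with $\vec v\in\mathbb Z^k\setminus\{0\}$, $m\in\mathbb Z$; a set of measure zero is a subset of $\mathbb Z^k$ covered by finitely many hyperplanes. A $k$-dimensional box of size $n$ is $\{\vec z\in\mathbb Z^k: c_i\le z_i\le c_i+n,\ i=1,\dots,k\}$ for some $c_i\in\mathbb Z$. *)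

From mathcomp Require Import all_boot all_order all_algebra.
Set Implicit Arguments. Unset Strict Implicit. Unset Printing Implicit Defensive.
Import Order.TTheory GRing.Theory Num.Theory.
Local Open Scope ring_scope.

Definition vec (k : nat) := {ffun 'I_k -> int}.

Definition dot (k : nat) (v z : vec k) : int := \sum_(i < k) v i * z i.

Definition halfspace (k : nat) (v : vec k) (m : int) : vec k -> Prop :=
  fun z => m < dot v z.

Definition polyhedral (k : nat) (R : vec k -> Prop) : Prop :=
  (forall z, R z) \/
  exists hs : seq (vec k * int),
    forall z, R z <-> all (fun h => h.2 < dot h.1 z) hs.

Definition hyperplane (k : nat) (v : vec k) (m : int) : vec k -> Prop :=
  fun z => dot v z = m.

Definition measure_zero (k : nat) (S : vec k -> Prop) : Prop :=
  exists hs : seq (vec k * int),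
    (forall h, h \in hs -> h.1 != 0) /\
    forall z, S z -> exists2 h, h \in hs & hyperplane h.1 h.2 z.

Definition box (k : nat) (c : vec k) (n : nat) : vec k -> Prop :=
  fun z => forall i : 'I_k, c i <= z i <= c i + n%:Z.

(** Shrink every half-space [m < v.z] of the region to [m + n |v|_1 < v.z].
    On a box of size [n] with corner [z] the form [v.w] drops by at most
    [n |v|_1] below [v.z], so the box at a point of the shrunken region stays
    in the region.  A point of the region outside the shrunken one satisfies
    [m < v.z <= m + n |v|_1] for some [v != 0], i.e. it lies on one of
    finitely many hyperplanes [v.z = m + t]. *)

From mathcomp Require Import all_boot all_order all_algebra.
From mathcomp Require Import zify.
Set Implicit Arguments. Unset Strict Implicit. Unset Printing Implicit Defensive.
Import Order.TTheory GRing.Theory Num.Theory.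
Local Open Scope ring_scope.

Lemma box_corner (k n : nat) (c : vec k) : box c n c.
Proof. by move=> i; rewrite lexx /= lerDl. Qed.

Lemma dot0 (k : nat) (z : vec k) : dot 0 z = 0.
Proof. by rewrite /dot big1 // => i _; rewrite ffunE mul0r. Qed.

Lemma dotBr (k : nat) (v z w : vec k) :
  dot v w - dot v z = \sum_(i < k) v i * (w i - z i).
Proof.
by rewrite /dot -sumrB; apply: eq_bigr => i _; rewrite mulrBr.
Qed.

Definition norm1 (k : nat) (v : vec k) : int := \sum_(i < k) `|v i|.

Lemma norm1_0 (k : nat) : norm1 (0 : vec k) = 0.
Proof. by rewrite /norm1 big1 // => i _; rewrite ffunE. Qed.

Lemma dot_box_ge (k n : nat) (v c w : vec k) :
  box c n w -> dot v c - n%:Z * norm1 v <= dot v w.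
Proof.
move=> cw; suff: - (n%:Z * norm1 v) <= dot v w - dot v c by lia.
rewrite dotBr /norm1 mulr_sumr -sumrN.
apply: ler_sum => i _; have := cw i.
move: (v i) (w i) (c i) => a x y; case: (ger0P a) => ha; nia.
Qed.

Lemma measure_zero0 (k : nat) : measure_zero (fun _ : vec k => False).
Proof. by exists [::]; split=> // z []. Qed.

Lemma measure_zeroS (k : nat) (S T : vec k -> Prop) :
  (forall z, S z -> T z) -> measure_zero T -> measure_zero S.
Proof. by move=> ST [hs [nz covT]]; exists hs; split=> // z /ST /covT. Qed.

Lemma measure_zero_bigcup (k : nat) (I : eqType) (s : seq I)
    (S : I -> vec k -> Prop) :
  (forall x, x \in s -> measure_zero (S x)) ->
  measure_zero (fun z => exists2 x, x \in s & S x z).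
Proof.
elim: s => [_|x s IHs zS]; first by apply: measure_zeroS (measure_zero0 k) => z [].
have [hx [nzx covx]] := zS x (mem_head x s).
have [hs [nzs covs]] := IHs (fun y ys => zS y (mem_behead (s := x :: s) ys)).
exists (hx ++ hs); split=> [h|z [y]].
  by rewrite mem_cat => /orP[/nzx|/nzs].
rewrite inE => /orP[/eqP-> /covx|ys Syz].
  by case=> h hin hz; exists h; rewrite // mem_cat hin.
have [h hin hz] := covs z (ex_intro2 _ _ y ys Syz).
by exists h; rewrite // mem_cat hin orbT.
Qed.

Lemma measure_zero_slab (k : nat) (v : vec k) (m d : int) :
  v != 0 -> measure_zero (fun z => m < dot v z <= m + d).
Proof.
move=> nz_v; exists [seq (v, m + t%:Z) | t <- iota 1 `|d|]; split.
  by move=> h /mapP[t _ ->].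
move=> z /andP[lo hi]; exists (v, m + `|dot v z - m|%:Z).
  by apply: map_f; rewrite mem_iota; lia.
by rewrite /hyperplane /=; lia.
Qed.

Section Shrink.

Variables (k n : nat) (hs : seq (vec k * int)).

Definition in_region (z : vec k) := all (fun h => h.2 < dot h.1 z) hs.

Definition in_shrunk (z : vec k) :=
  all (fun h => h.2 + n%:Z * norm1 h.1 < dot h.1 z) hs.

Lemma shrunk_box_sub (c w : vec k) :
  in_shrunk c -> box c n w -> in_region w.
Proof.
move=> /allP shr cw; apply/allP => h hin.
apply: lt_le_trans (dot_box_ge h.1 cw).
by rewrite ltrBrDr; apply: shr.
Qed.

Lemma region_minus_shrunk_slab (z : vec k) :
  in_region z -> ~~ in_shrunk z ->
  exists2 h, h \in [seq h <- hs | h.1 != 0] &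
    h.2 < dot h.1 z <= h.2 + n%:Z * norm1 h.1.
Proof.
move=> /allP reg /allPn[h hin /= out]; have lo := reg h hin.
exists h; last by apply/andP; split=> //; rewrite leNgt.
rewrite mem_filter hin andbT; apply: contraNneq out => v0.
by move: lo; rewrite v0 norm1_0 mulr0 addr0.
Qed.

Lemma measure_zero_region_minus_shrunk :
  measure_zero (fun z => in_region z /\ ~~ in_shrunk z).
Proof.
apply: measure_zeroS (measure_zero_bigcup (s := [seq h <- hs | h.1 != 0])
  (S := fun h z => h.2 < dot h.1 z <= h.2 + n%:Z * norm1 h.1) _).
  by move=> z [reg out]; apply: region_minus_shrunk_slab.
by move=> h; rewrite mem_filter => /andP[nz _]; apply: measure_zero_slab.
Qed.

End Shrink.

Theorem mainTheorem19 (k : nat) (R : vec k -> Prop) (n : nat) :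
  polyhedral R -> (0 < n)%N ->
  exists (Z R' : vec k -> Prop),
    measure_zero Z /\ polyhedral R' /\
    (forall z, R z <-> (Z z \/ R' z)) /\
    (forall z, R' z ->
       exists c : vec k, box c n z /\ (forall w, box c n w -> R w)).
Proof.
move=> [Rall|[hs defR]] _.
  exists (fun _ => False), R; split; [|split; [|split]] => [|||z _].
  - exact: measure_zero0.
  - by left.
  - by move=> z; split=> [|[]//]; right.
  - by exists z; split=> [|w _]; [apply: box_corner | apply: Rall].
have shrunk_R c w : in_shrunk n hs c -> box c n w -> R w.
  by move=> shr cw; apply/defR; apply: shrunk_box_sub shr cw.
exists (fun z => R z /\ ~~ in_shrunk n hs z), (in_shrunk n hs).
split; [|split; [|split]] => [|||z shr].
- apply: measure_zeroS (measure_zero_region_minus_shrunk n hs).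
  by move=> z [/defR].
- by right; exists [seq (h.1, h.2 + n%:Z * norm1 h.1) | h <- hs] => z; rewrite all_map.
- move=> z; split=> [Rz|[[]//|shr]].
    by case: (boolP (in_shrunk n hs z)) => shr; [right|left].
  by apply: (shrunk_R z z shr); apply: box_corner.
- by exists z; split=> [|w]; [apply: box_corner | apply: shrunk_R].
Qed.
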